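(* Assume $S(w)\neq\emptyset$ for all $w\in\mathbb R^m$ and that $x\mapsto\max_{i}(f_i(x)-w_i)$ satisfies the growth property uniformly along approximating sequences. Let $w^*\in\mathbb R^m$ and $(w^k)_{k\ge0}\subseteq\mathbb R^m$ with $w^k\to w^*$. Then $(S(w^k))_{k\ge0}$ is Mosco convergent to $S(w^* )$.
   Context: $\mathcal H$ is a real Hilbert space; $f_1,\dots,f_m:\mathcal H\to\mathbb R$ are convex and continuously differentiable. For $w\in\mathbb R^m$, $S(w):=\operatorname{argmin}_{z\in\mathcal H}\max_{i=1,\dots,m}(f_i(z)-w_i)$ (a closed convex set). Growth property uniformly along approximating sequences: for every $w^*\in\mathbb R^m$ there is a strictly increasing $\psi:[0,\infty)\to[0,\infty)$ with $\psi(0)=0$ such that for every sequence $(w^k)\subseteq\mathbb R^m$ with $w^k\to w^*$, $\max_i(f_i(x^* )-w^k_i)-\inf_{z\in\mathcal H}\max_i(f_i(z)-w^k_i)\ge\psi(\operatorname{dist}(x^*,S(w^k)))$ for all $x^*\in S(w^* )$ and all $k\ge0$. Mosco convergence: nonempty closed convex sets $C^k$ are Mosco convergent to a nonempty closed convex $C^*$ if (i) for every $x^*\in C^*$ there exist $x^k\in C^k$ with $x^k\to x^*$ strongly, and (ii) whenever $(k_l)$ is a subsequence, $x^{k_l}\in C^{k_l}$ and $x^{k_l}\rightharpoonup x^*$ weakly, then $x^*\in C^*$. *)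

From HB Require Import structures.
From mathcomp Require Import all_boot all_order all_algebra.
From mathcomp Require Import all_classical all_reals all_analysis.
Set Implicit Arguments. Unset Strict Implicit. Unset Printing Implicit Defensive.
Import Order.TTheory GRing.Theory Num.Theory.
Import numFieldNormedType.Exports.
Local Open Scope classical_set_scope.
Local Open Scope ring_scope.

Section Defs.
Context {R : realType} {V : completeNormedModType R}.

(* [ip] is an inner product inducing the norm of V: together with the
   completeness of V this makes (V, ip) a real Hilbert space. *)
Definition is_hilbert_inner (ip : V -> V -> R) : Prop :=
  [/\ (forall x y, ip x y = ip y x),
      (forall a x y z, ip (a *: x + y) z = a * ip x z + ip y z) &
      (forall x, ip x x = `|x| ^+ 2)].

Definition convex_fun (f : V -> R) : Prop :=
  forall x y (t : R), 0 <= t <= 1 ->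
    f (t *: x + (1 - t) *: y) <= t * f x + (1 - t) * f y.

Definition cont_diff (f : V -> R) : Prop :=
  (forall x, differentiable f x) /\
  (forall x (e : R), 0 < e -> exists2 d : R, 0 < d &
     forall y, `|y - x| < d -> forall h, `|'d f y h - 'd f x h| <= e * `|h|).

(* max_{i} (f_i z - w_i), m >= 1 assumed in the theorem *)
Definition maxfun (m : nat) (f : 'I_m -> V -> R) (w : 'I_m -> R) (z : V) : R :=
  fine (\big[Order.max/-oo%E]_(i < m) ((f i z - w i)%:E)).

Definition Sset (m : nat) (f : 'I_m -> V -> R) (w : 'I_m -> R) : set V :=
  [set x | forall z, maxfun f w x <= maxfun f w z].

Definition infval (m : nat) (f : 'I_m -> V -> R) (w : 'I_m -> R) : R :=
  inf (range (maxfun f w)).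

Definition distset (x : V) (C : set V) : R := inf [set `|x - y| | y in C].

Definition weak_cvg (ip : V -> V -> R) (u : nat -> V) (x : V) : Prop :=
  forall y, (fun k => ip (u k) y) @ \oo --> ip x y.

Definition mosco_cvg (ip : V -> V -> R) (C : nat -> set V) (Cs : set V) : Prop :=
  (forall x, Cs x -> exists2 u : nat -> V, (forall k, C k (u k)) & u @ \oo --> x) /\
  (forall (kk : nat -> nat) (u : nat -> V) (x : V),
     (forall n, (kk n < kk n.+1)%N) ->
     (forall n, C (kk n) (u n)) -> weak_cvg ip u x -> Cs x).

Definition growth_uniform (m : nat) (f : 'I_m -> V -> R) : Prop :=
  forall ws : 'I_m -> R, exists psi : R -> R,
    [/\ psi 0 = 0,
        (forall s, 0 <= s -> 0 <= psi s),
        (forall s t, 0 <= s -> s < t -> psi s < psi t) &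
        forall w : nat -> 'I_m -> R, (forall i, (fun k => w k i) @ \oo --> ws i) ->
          forall xs, Sset f ws xs -> forall k,
            maxfun f (w k) xs - infval f (w k) >= psi (distset xs (Sset f (w k)))].

End Defs.

From HB Require Import structures.
From mathcomp Require Import all_boot all_order all_algebra.
From mathcomp Require Import all_classical all_reals all_analysis.
From mathcomp Require Import ring lra.
Import Order.TTheory GRing.Theory Num.Theory.
Import numFieldNormedType.Exports.
Local Open Scope classical_set_scope.
Local Open Scope ring_scope.

(* The map [w |-> max_i (f_i z - w_i)] is 1-Lipschitz for the l1 norm, uniformly
   in z.  Hence for x in S(ws) the gap of x for the weights w_k is at most
   2 sum_i |w_k,i - ws_i|, and the growth property drives dist(x, S(w_k)) to 0.
   For a weak limit x of points u_n of S(w_(k_n)), take an index i active at x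
   for ws and the Riesz representative g of the differential of f_i at x; the
   convexity inequality f_i(u_n) >= f_i(x) + <u_n - x, g> gives, for every z,
     max_i (f_i x - ws_i) <= max_i (f_i z - ws_i)
                             + 2 sum_i |w_(k_n),i - ws_i| + <x - u_n, g>,
   and the error terms vanish as n grows. *)

Lemma quadratic_ge0_linear_coef0 (R : realFieldType) (a b : R) :
  (forall t, 0 <= t * a + t ^+ 2 * b) -> a = 0.
Proof.
move=> ge0; apply/eqP; apply: contraT => a_neq0.
pose c := `|b| + 1.
have c_gt0 : 0 < c by rewrite /c ltr_wpDl.
have b_lt_c : b < c by rewrite /c; have := ler_norm b; lra.
have := ge0 (- a / c).
have -> : - a / c * a + (- a / c) ^+ 2 * b = a ^+ 2 * (b - c) / c ^+ 2.
  by field; rewrite gt_eqF.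
rewrite pmulr_lge0 ?invr_gt0 ?exprn_gt0// pmulr_rge0 ?exprn_even_gt0//; lra.
Qed.

Lemma inf_image_lt {R : realType} {T : Type} (F : T -> R) (A : set T) {e : R} :
  A !=set0 -> 0 < e -> exists2 y, A y & F y < inf (F @` A) + e.
Proof.
move=> [a Aa] e_gt0.
have : inf (F @` A) < inf (F @` A) + e by rewrite ltrDl.
by move/inf_lt => [|_ [y Ay <-] Fy_lt]; [exists (F a), a | exists y].
Qed.

Lemma inf_range_min {R : realType} {T : Type} (F : T -> R) y :
  (forall z, F y <= F z) -> inf (range F) = F y.
Proof.
move=> y_min; apply/eqP; rewrite eq_le; apply/andP; split.
  by apply: ge_inf; [exists (F y) => _ [z _ <-] | exists y].
by apply: lb_le_inf; [exists (F y), y | move=> _ [z _ <-]].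
Qed.

Lemma cauchy_cvg_sqr_dist {R : realType} {V : completeNormedModType R}
    (u : V ^nat) (a : R ^nat) :
  (forall n k, `|u n - u k| ^+ 2 <= a n + a k) -> a @ \oo --> 0 -> cvgn u.
Proof.
move=> uak a0; apply/cauchy_cvgP/cauchy_exP => e e_gt0.
have a_small : \forall n \near \oo, a n < e ^+ 2 / 2.
  by apply: (cvgr_lt 0) => //; rewrite divr_gt0// exprn_gt0.
near \oo => N; exists (u N).
suff : \forall k \near \oo, ball (u N) e (u k) by [].
near=> k; rewrite -ball_normE /=.
rewrite -(ltr_pXn2r (_ : (0 < 2)%N)) ?nnegrE ?normr_ge0 ?ltW//.
apply: (le_lt_trans (uak _ _)); rewrite [e ^+ 2]splitr ltrD//.
  by near: N.
by near: k.
Unshelve. all: by end_near. Qed.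

Lemma cvg_sum_dist0 {R : realType} {m : nat} (w : nat -> 'I_m -> R) (ws : 'I_m -> R) :
  (forall i, (fun k => w k i) @ \oo --> ws i) ->
  (fun k => \sum_i `|w k i - ws i|) @ \oo --> 0.
Proof.
move=> w_ws; have sum0 : \sum_(i < m) `|ws i - ws i| = 0 :> R.
  by rewrite big1 // => i _; rewrite subrr normr0.
rewrite -[X in _ --> X]sum0; apply: (@cvg_big R _ +%R 0 _ add_continuous) => // i _.
by apply: cvg_norm; apply: cvgB => //; exact: cvg_cst.
Qed.

Lemma cvg_increasing_nat (kk : nat -> nat) :
  (forall n, (kk n < kk n.+1)%N) -> kk @ \oo --> \oo.
Proof.
move=> kk_lt P [N _ PN]; exists N => // n /= Nn; apply: PN.
have n_le_kk j : (j <= kk j)%N.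
  by elim: j => // j IHj; exact: leq_ltn_trans IHj (kk_lt j).
exact: leq_trans Nn (n_le_kk n).
Qed.

Lemma growth_cvg0 {R : realType} (psi : R -> R) (d b : R ^nat) :
  psi 0 = 0 -> (forall s t, 0 <= s -> s < t -> psi s < psi t) ->
  (forall k, 0 <= d k) -> (forall k, psi (d k) <= b k) ->
  b @ \oo --> 0 -> d @ \oo --> 0.
Proof.
move=> psi0 psi_lt d_ge0 psi_d b0; apply/cvgrPdist_lt => e e_gt0.
have psi_e_gt0 : 0 < psi e by rewrite -psi0; exact: psi_lt.
near=> k; rewrite sub0r normrN ger0_norm // ltNge; apply/negP => e_le_d.
have : psi e <= psi (d k).
  by move: e_le_d; rewrite le_eqVlt => /predU1P[<- //|/psi_lt-/(_ (ltW e_gt0))/ltW].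
have : b k < psi e by near: k; exact: (cvgr_lt 0).
have := psi_d k; lra.
Unshelve. all: by end_near. Qed.

Section inner_product.
Context {R : realType} {V : completeNormedModType R} {ip : V -> V -> R}.
Hypothesis ipH : is_hilbert_inner ip.

Lemma ipC x y : ip x y = ip y x. Proof. by case: ipH. Qed.

Lemma ip_norm x : ip x x = `|x| ^+ 2. Proof. by case: ipH. Qed.

Lemma ipDl x y z : ip (x + y) z = ip x z + ip y z.
Proof. by case: ipH => _ + _ => /(_ 1 x y z); rewrite scale1r mul1r. Qed.

Lemma ipZl a x z : ip (a *: x) z = a * ip x z.
Proof.
have ip0l : ip 0 z = 0 by have := ipDl 0 0 z; rewrite addr0; lra.
by case: ipH => _ + _ => /(_ a x 0 z); rewrite addr0 ip0l addr0.
Qed.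

Lemma ipBl x y z : ip (x - y) z = ip x z - ip y z.
Proof. by rewrite ipDl -scaleN1r ipZl mulN1r. Qed.

Lemma ipDr x y z : ip z (x + y) = ip z x + ip z y.
Proof. by rewrite ipC ipDl !(ipC z). Qed.

Lemma ipZr a x z : ip z (a *: x) = a * ip z x.
Proof. by rewrite ipC ipZl ipC. Qed.

Lemma sqr_normD x y : `|x + y| ^+ 2 = `|x| ^+ 2 + 2 * ip x y + `|y| ^+ 2.
Proof. by rewrite -!ip_norm ipDl !ipDr (ipC y x); ring. Qed.

Lemma parallelogram (x y : V) :
  `|x + y| ^+ 2 + `|x - y| ^+ 2 = 2 * (`|x| ^+ 2 + `|y| ^+ 2).
Proof.
have ipNr : ip x (- y) = - ip x y by rewrite -scaleN1r ipZr mulN1r.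
by rewrite !sqr_normD normrN ipNr; ring.
Qed.

Section riesz.
Variable L : {linear V -> R}.
Hypothesis L_cont : continuous L.

(* The minimiser of this energy represents [L]; by the parallelogram law its
   minimising sequences are Cauchy. *)
Let J y := `|y| ^+ 2 / 2 - L y.

Let J_bounded_below : has_lbound (range J).
Proof.
have [M [_ LM]] := (linear_boundedP L).1 ((linear_bounded_continuous L).2 L_cont).
have {LM}LM := LM (M + 1) ltac:(by rewrite ltrDl).
exists (- (M + 1) ^+ 2 / 2) => _ [y _ <-]; rewrite /J.
have := LM y; have := ler_norm (L y); have := sqr_ge0 (`|y| - (M + 1)); nra.
Qed.

Let J_midpoint y z : J y + J z = 2 * J (2^-1 *: (y + z)) + `|y - z| ^+ 2 / 4.
Proof.
rewrite /J normrZ ger0_norm ?invr_ge0// [L (_ *: _)]linearZ linearD /= exprMn.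
rewrite -[_ *: (_ + _)]/(2^-1 * (L y + L z)).
have := parallelogram y z; lra.
Qed.

Let J_cont : continuous J.
Proof.
move=> x; apply: cvgB; last exact: L_cont.
by apply: cvgMr_tmp; rewrite expr2; apply: cvgM; exact: cvg_norm.
Qed.

Let J_attains_min : exists g, forall y, J g <= J y.
Proof.
have near_inf n : exists y, J y < inf (range J) + harmonic n.
  by have [y _] := inf_image_lt J setT (ex_intro _ 0 I) (harmonic_gt0 n); exists y.
have [ys ys_inf] := choice near_inf.
have inf_le y : inf (range J) <= J y by apply: ge_inf J_bounded_below _ _; exists y.
have : cvgn ys.
  apply: (@cauchy_cvg_sqr_dist _ _ _ (fun n => 4 * harmonic n)).
    move=> n k; have := J_midpoint (ys n) (ys k).
    have := inf_le (2^-1 *: (ys n + ys k)); have := ys_inf n; have := ys_inf k.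
    lra.
  by rewrite -(mulr0 4); apply: cvgMl_tmp; exact: cvg_harmonic.
move=> /cvg_ex[g ys_g]; exists g => y; apply: le_trans (inf_le y).
have Jys_g : J \o ys @ \oo --> J g.
  by apply: continuous_cvg; [exact: J_cont | exact: ys_g].
have Jys_inf : J \o ys @ \oo --> inf (range J).
  apply: (squeeze_cvgr _ (cvg_cst (inf (range J)))
    (_ : (fun n => inf (range J) + harmonic n) @ \oo --> _)).
    by near=> n; rewrite /= inf_le ltW.
  by rewrite -[X in _ --> X]addr0; apply: cvgD; [exact: cvg_cst|exact: cvg_harmonic].
by rewrite (cvg_unique _ Jys_g Jys_inf).
Unshelve. all: by end_near. Qed.

Lemma riesz_representation : exists g, forall h, L h = ip h g.
Proof.
have [g g_min] := J_attains_min; exists g => h.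
apply/esym/eqP; rewrite -subr_eq0; apply/eqP.
apply: (@quadratic_ge0_linear_coef0 _ _ (`|h| ^+ 2 / 2)) => t.
have := g_min (g + t *: h); rewrite /J sqr_normD linearD linearZ /= normrZ exprMn.
rewrite -[t *: L h]/(t * L h) ipZr (ipC g h) real_normK ?num_real //; lra.
Qed.

End riesz.
End inner_product.

Lemma convex_diff_ge {R : realType} {V : completeNormedModType R} (f : V -> R) x y :
  convex_fun f -> differentiable f x -> f x + 'd f x (y - x) <= f y.
Proof.
move=> f_cvx f_diff; rewrite addrC -lerBrDr.
pose q h := h^-1 *: (f (h *: (y - x) + x) - f x).
have q_cvg : q h @[h --> 0^'+] --> 'd f x (y - x).
  by rewrite -deriveE //; apply: cvg_dnbhs_at_right; exact: diff_derivable.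
apply: (cvgr_to_le q_cvg); near=> h.
have h_gt0 : 0 < h by near: h; exact: nbhs_right_gt.
have h_le1 : h <= 1 by near: h; apply: nbhs_right_le; exact: ltr01.
have := f_cvx y x h; rewrite h_le1 ltW // => /(_ isT).
have -> : h *: y + (1 - h) *: x = h *: (y - x) + x.
  by rewrite scalerBr scalerBl scale1r addrCA addrC.
rewrite /q -[h^-1 *: _]/(h^-1 * _) ler_pdivrMl //; lra.
Unshelve. all: by end_near. Qed.

Section maxfun.
Context {R : realType} {V : completeNormedModType R} {m : nat} (f : 'I_m -> V -> R).

Let maxfun_bigmax (w : 'I_m -> R) z j : exists2 i,
  maxfun f w z = f i z - w i & ((f j z - w j)%:E <= (f i z - w i)%:E)%E.
Proof.
have [i _ max_i] := @eq_bigmax _ _ _ -oo%E j xpredT (fun i => (f i z - w i)%:E)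
  isT (fun i _ => leNye _).
exists i; first by rewrite /maxfun max_i.
by rewrite -max_i; exact: (le_bigmax -oo%E (fun i => (f i z - w i)%:E) j).
Qed.

Lemma maxfun_ge (w : 'I_m -> R) z j : f j z - w j <= maxfun f w z.
Proof. by have [i -> ?] := maxfun_bigmax w z j; rewrite -lee_fin. Qed.

Lemma maxfun_attained (w : 'I_m -> R) z : (0 < m)%N ->
  exists i, maxfun f w z = f i z - w i.
Proof.
by move=> m_gt0; have [i ? _] := maxfun_bigmax w z (Ordinal m_gt0); exists i.
Qed.

Lemma maxfun_dist (w w' : 'I_m -> R) z : (0 < m)%N ->
  `|maxfun f w z - maxfun f w' z| <= \sum_i `|w i - w' i|.
Proof.
move=> m_gt0.
suff maxfun_le (v v' : 'I_m -> R) :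
    maxfun f v z <= maxfun f v' z + \sum_i `|v i - v' i|.
  rewrite ler_distl maxfun_le andbT lerBlDr.
  under eq_bigr do rewrite distrC.
  exact: maxfun_le.
have [i ->] := maxfun_attained v z m_gt0.
have := maxfun_ge v' z i; have := ler_norm (v' i - v i); rewrite distrC.
have : `|v i - v' i| <= \sum_j `|v j - v' j|.
  by rewrite (bigD1 i) //= lerDl sumr_ge0.
lra.
Qed.

End maxfun.

Section mosco.
Context {R : realType} {V : completeNormedModType R} {m : nat} (f : 'I_m -> V -> R).
Hypothesis m_gt0 : (0 < m)%N.
Variables (ws : 'I_m -> R) (w : nat -> 'I_m -> R).
Hypothesis w_ws : forall i, (fun k => w k i) @ \oo --> ws i.

Let D k := \sum_i `|w k i - ws i|.

Let D_cvg0 : D @ \oo --> 0. Proof. exact: cvg_sum_dist0. Qed.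

Let maxfun_w_ws k z :
  maxfun f (w k) z <= maxfun f ws z + D k /\ maxfun f ws z <= maxfun f (w k) z + D k.
Proof.
have := maxfun_dist f (w k) ws z m_gt0; rewrite -/(D k) ler_distl; lra.
Qed.

Lemma Sset_strong_approx :
  (forall v, Sset f v !=set0) -> growth_uniform f ->
  forall xs, Sset f ws xs ->
  exists2 u : V ^nat, (forall k, Sset f (w k) (u k)) & u @ \oo --> xs.
Proof.
move=> S_neq0 growth xs S_xs.
have [psi [psi0 _ psi_lt psi_dist]] := growth ws.
pose d k := distset xs (Sset f (w k)).
have d_ge0 k : 0 <= d k.
  have [y S_y] := S_neq0 (w k).
  by apply: lb_le_inf; [exists `|xs - y|, y | move=> _ [z _ <-]].
have psi_d k : psi (d k) <= 2 * D k.
  have [y S_y] := S_neq0 (w k).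
  have := psi_dist w w_ws xs S_xs k; rewrite /infval (inf_range_min _ _ S_y).
  have := S_xs y; have := maxfun_w_ws k xs; have := maxfun_w_ws k y; lra.
have d_cvg0 : d @ \oo --> 0.
  apply: (growth_cvg0 _ _ _ psi0 psi_lt d_ge0 psi_d).
  by rewrite -(mulr0 2); apply: cvgMl_tmp.
have near_proj k : exists y, Sset f (w k) y /\ `|xs - y| < d k + harmonic k.
  have [y S_y y_near] :=
    inf_image_lt (fun y => `|xs - y|) _ (S_neq0 (w k)) (harmonic_gt0 k).
  by exists y.
have [u /all_and2[S_u u_near]] := choice near_proj.
exists u => //; apply/cvgrPdist_lt => e e_gt0.
near=> k; apply: (lt_trans (u_near k)); rewrite [e]splitr ltrD //; near: k.
  by apply: (cvgr_lt 0 d_cvg0); rewrite divr_gt0.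
by apply: (cvgr_lt 0 cvg_harmonic); rewrite divr_gt0.
Unshelve. all: by end_near. Qed.

Lemma Sset_weak_limit (ip : V -> V -> R) : is_hilbert_inner ip ->
  (forall i, convex_fun (f i)) -> (forall i x, differentiable (f i) x) ->
  forall (kk : nat -> nat) (u : V ^nat) (x : V),
  (forall n, (kk n < kk n.+1)%N) -> (forall n, Sset f (w (kk n)) (u n)) ->
  weak_cvg ip u x -> Sset f ws x.
Proof.
move=> ipH f_cvx f_diff kk u x kk_lt S_u u_x z.
have [i max_i] := maxfun_attained f ws x m_gt0.
have [g dfg] := riesz_representation ipH _ (diff_continuous (f_diff i x)).
pose b n := 2 * D (kk n) + (ip x g - ip (u n) g).
have b_cvg0 : b @ \oo --> 0.
  have : b @ \oo --> 2 * 0 + (ip x g - ip x g).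
    apply: cvgD.
      by apply: cvgMl_tmp; exact: (cvg_comp _ _ (cvg_increasing_nat _ kk_lt) D_cvg0).
    by apply: cvgB; [exact: cvg_cst | exact: u_x].
  by rewrite mulr0 subrr addr0.
have le_b n : maxfun f ws x <= maxfun f ws z + b n.
  have := convex_diff_ge _ _ (u n) (f_cvx i) (f_diff i x); rewrite dfg (ipBl ipH).
  have := maxfun_ge f ws (u n) i; have := S_u n z.
  have := maxfun_w_ws (kk n) (u n); have := maxfun_w_ws (kk n) z.
  rewrite max_i /b; lra.
have bound_cvg : (fun n => maxfun f ws z + b n) @ \oo --> maxfun f ws z.
  by rewrite -[X in _ --> X]addr0; apply: cvgD => //; exact: cvg_cst.
apply: (cvgr_to_ge bound_cvg); exact: nearW.
Qed.

End mosco.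

Theorem mainTheorem4 (R : realType) (V : completeNormedModType R)
  (ip : V -> V -> R) (m : nat) (f : 'I_m -> V -> R) :
  is_hilbert_inner ip ->
  (0 < m)%N ->
  (forall i, convex_fun (f i)) ->
  (forall i, cont_diff (f i)) ->
  (forall w : 'I_m -> R, Sset f w !=set0) ->
  growth_uniform f ->
  forall (ws : 'I_m -> R) (w : nat -> 'I_m -> R),
    (forall i, (fun k => w k i) @ \oo --> ws i) ->
    mosco_cvg ip (fun k => Sset f (w k)) (Sset f ws).
Proof.
move=> ipH m_gt0 f_cvx f_C1 S_neq0 growth ws w w_ws; split.
  exact: Sset_strong_approx.
apply: Sset_weak_limit => // i; exact: (f_C1 i).1.
Qed.
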